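(* Let $r,s\ge0$, and let $b_i=\prod_{\mathcal F}b_i^{(n)}$ ($1\le i\le r$) and $c_j=\prod_{\mathcal F}c_j^{(n)}$ ($1\le j\le s$) be complex numbers written as ultraproducts of elements $b_i^{(n)},c_j^{(n)}\in\Bbbk$. Then for every central character $\psi$ of $U(\mathfrak{gl}_t)$ there exist central characters $\psi^{(n)}$ of $U(\mathfrak{gl}_n(\Bbbk))$ with $\psi=\prod_{\mathcal F}\psi^{(n)}$ such that $\psi^{(n)}(C_k)=0$ for all $k\ge1$ when $n\le r+s$, and such that for every $n>r+s$, $\psi^{(n)}$ is the central character by which $Z(U(\mathfrak{gl}_n(\Bbbk)))$ acts on some Verma module $M_{\mu^{(n)}}$ with $$\mu^{(n)}_i=b_i^{(n)}\ (1\le i\le r),\qquad \mu^{(n)}_{n-j+1}=c_j^{(n)}\ (1\le j\le s).$$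
   Context: $\Bbbk=\overline{\mathbb Q}$; $\mathcal F$ is a fixed nonprincipal ultrafilter on $\mathbb N$ with a fixed field isomorphism $\prod_{\mathcal F}\Bbbk\simeq\mathbb C$, and $t$ is the image of $\prod_{\mathcal F}n$. For $\mathfrak{gl}_n(\Bbbk)$, $M_\lambda=U(\mathfrak{gl}_n)\otimes_{U(\mathfrak b)}\Bbbk_{\lambda-\rho}$ ($\mathfrak b$ upper triangular Borel, $\rho$ half-sum of positive roots), and $C_k\in Z(U(\mathfrak{gl}_n(\Bbbk)))$ ($k\ge1$) is the central element acting on every $M_\lambda$ by $\sum_i\lambda_i^k$. In $U(\mathfrak{gl}_t)$ (the universal enveloping algebra of $\mathfrak{gl}_t=V\otimes V^*$ in Deligne's category $\operatorname{Rep}(GL_t)$, realized as an ultraproduct of the $U(\mathfrak{gl}_n(\Bbbk))$), $C_k=\prod_{\mathcal F}C_k$ and $Z(U(\mathfrak{gl}_t))=\mathbb C[C_1,C_2,\ldots]$, so a central character $\psi$ is the same as an arbitrary sequence $\psi_k=\psi(C_k)\in\mathbb C$. For central characters $\psi^{(n)}$ of $\mathfrak{gl}_n(\Bbbk)$, $\psi=\prod_{\mathcal F}\psi^{(n)}$ means $\psi(C_k)=\prod_{\mathcal F}\psi^{(n)}(C_k)$ for all $k\ge1$. *)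

From HB Require Import structures.
From mathcomp Require Import all_boot all_order all_algebra all_field.
From mathcomp Require Import reals.
From mathcomp Require Import complex.
Set Implicit Arguments. Unset Strict Implicit. Unset Printing Implicit Defensive.
Import Order.TTheory GRing.Theory Num.Theory.
Local Open Scope ring_scope.

(* k = \bar Q is modelled by algC (MathComp's algebraic closure of Q);
   C is modelled by R[i] (complex R) for an arbitrary realType R. *)

Definition nonprincipal_ultrafilter (F : (nat -> Prop) -> Prop) : Prop :=
  [/\ F (fun _ => True),
      ~ F (fun _ => False),
      (forall A B : nat -> Prop, F A -> (forall n, A n -> B n) -> F B),
      (forall A B : nat -> Prop, F A -> F B -> F (fun n => A n /\ B n)) &
      (forall A : nat -> Prop, F A \/ F (fun n => ~ A n))] /\
  (forall m : nat, ~ F (fun n => n = m)).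

(* theta : (nat -> algC) -> C is the composite of the canonical projection
   prod_n algC ->> prod_F algC with a field isomorphism prod_F algC ~= C.
   Thus theta f is "prod_F f". *)
Definition ultraproduct_iso (F : (nat -> Prop) -> Prop) (C : fieldType)
    (theta : (nat -> algC) -> C) : Prop :=
  [/\ (forall f g, theta f = theta g <-> F (fun n => f n = g n)),
      (forall y : C, exists f, theta f = y),
      (forall f g, theta (fun n => f n + g n) = theta f + theta g),
      (forall f g, theta (fun n => f n * g n) = theta f * theta g) &
      theta (fun _ => 1) = 1].

(* Value on C_k (k >= 1) of the central character of gl_n(k) by which the
   center acts on the Verma module M_lambda: sum_i lambda_i^k. *)
Definition verma_cc (n : nat) (lambda : 'I_n -> algC) (k : nat) : algC :=
  \sum_(i < n) lambda i ^+ k.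

(* A central character of U(gl_n(k)), recorded through its values
   psi k = psi(C_k), k >= 1 (psi 0 is irrelevant). *)
Definition central_char_gl (n : nat) (psi : nat -> algC) : Prop :=
  exists lambda : 'I_n -> algC, forall k, (0 < k)%N -> psi k = verma_cc lambda k.

From HB Require Import structures.
From mathcomp Require Import all_boot all_order all_algebra all_field.
From mathcomp Require Import reals.
From mathcomp Require Import complex.
From mathcomp Require Import zify ring.
From Stdlib Require Import ClassicalEpsilon.
Set Implicit Arguments. Unset Strict Implicit. Unset Printing Implicit Defensive.
Import Order.TTheory GRing.Theory Num.Theory.
Local Open Scope ring_scope.

(* Every finite sequence t_1, ..., t_K in algC is the sequence of the first K
   power sums of some multiset of at most K^2 numbers: having matched
   t_1, ..., t_K, adjoin the K+1 numbers a w^j (w a primitive (K+1)-th root of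
   unity), whose k-th power sums vanish for 0 < k <= K and whose (K+1)-th power
   sum (K+1) a^(K+1) can be made anything.  For n > r + s, put b and c at the
   two ends of the weight and such a multiset of size n - r - s in between;
   then psi^(n)(C_k) = f_k(n) as soon as k^2 + r + s <= n, where
   psi_k = prod_F f_k, so psi = prod_F psi^(n) because cofinite sets belong
   to a nonprincipal ultrafilter. *)

Definition powersum (R : pzSemiRingType) (x : seq R) (k : nat) : R :=
  \sum_(y <- x) y ^+ k.

Lemma powersum_cat (R : pzSemiRingType) (x y : seq R) k :
  powersum (x ++ y) k = powersum x k + powersum y k.
Proof. exact: big_cat. Qed.

Lemma sum_prim_root_exp_eq0 (R : idomainType) (w : R) N k :
  N.-primitive_root w -> (0 < k < N)%N -> \sum_(j < N) (w ^+ k) ^+ j = 0.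
Proof.
move=> prim_w /andP[k_gt0 lt_kN].
have wk_neq1 : w ^+ k != 1.
  by rewrite -(prim_order_dvd prim_w) gtnNdvd.
have := subrX1 (w ^+ k) N.
rewrite exprAC (prim_expr_order prim_w) expr1n subrr => /esym/eqP.
by rewrite mulf_eq0 subr_eq0 (negPf wk_neq1) => /eqP.
Qed.

Lemma powersum_root_orbit (R : idomainType) (a w : R) N k :
  N.-primitive_root w -> (0 < k <= N)%N ->
  powersum (mkseq (fun j => a * w ^+ j) N) k = if k == N then a ^+ N *+ N else 0.
Proof.
move=> prim_w /andP[k_gt0 le_kN].
have -> : powersum (mkseq (fun j => a * w ^+ j) N) k =
          a ^+ k * \sum_(j < N) (w ^+ k) ^+ j.
  rewrite /powersum big_map -(subn0 N) big_mkord subn0 mulr_sumr.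
  by apply: eq_bigr => j _; rewrite exprMn exprAC.
have [-> | neq_kN] := eqVneq k N.
  rewrite (prim_expr_order prim_w) (eq_bigr (fun=> 1)) => [|j _]; last exact: expr1n.
  by rewrite sumr_const card_ord mulr_natr.
by rewrite sum_prim_root_exp_eq0 ?mulr0 // k_gt0 ltn_neqAle neq_kN.
Qed.

Lemma exists_seq_powersums (t : nat -> algC) K :
  exists x : seq algC,
    (size x <= K * K)%N /\ forall k, (0 < k <= K)%N -> powersum x k = t k.
Proof.
elim: K => [|K [x [size_x px]]].
  by exists [::]; split=> // k; rewrite leqn0 andbC => /andP[/eqP->].
have [w prim_w] := C_prim_root_exists (ltn0Sn K).
pose a := K.+1.-root ((t K.+1 - powersum x K.+1) / K.+1%:R).
exists (x ++ mkseq (fun j => a * w ^+ j) K.+1); split.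
  by rewrite size_cat size_mkseq; nia.
move=> k /andP[k_gt0 le_kK1]; rewrite powersum_cat powersum_root_orbit ?k_gt0 //.
have [-> | neq_kK1] := eqVneq k K.+1.
  by rewrite rootCK // -mulr_natr mulfVK ?pnatr_eq0 //; ring.
by rewrite addr0 px // k_gt0 -ltnS ltn_neqAle neq_kK1.
Qed.

Lemma exists_seq_powersums_size (t : nat -> algC) m :
  exists x : seq algC, size x = m /\
    forall k, (0 < k)%N -> (k * k <= m)%N -> powersum x k = t k.
Proof.
have [K [KK_le_m K_max]] :
    exists K, (K * K <= m)%N /\ forall k, (k * k <= m)%N -> (k <= K)%N.
  exists (\max_(K < m.+1 | (K * K <= m)%N) K); split.
    by apply: (big_ind (fun K => (K * K <= m)%N)) => //= u v; nia.
  move=> k kk_le_m; have lt_km : (k < m.+1)%N by nia.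
  exact: (@leq_bigmax_cond _ _ _ (Ordinal lt_km)).
have [x [size_x px]] := exists_seq_powersums t K.
exists (x ++ nseq (m - size x) 0); split; first by rewrite size_cat size_nseq; lia.
move=> k k_gt0 kk_le_m; rewrite powersum_cat px ?k_gt0 ?K_max //.
rewrite [powersum (nseq _ _) _]big1_seq ?addr0 // => y /andP[_ /nseqP[-> _]].
by rewrite expr0n gtn_eqF.
Qed.

Lemma verma_cc_nth n (x : seq algC) k :
  size x = n -> verma_cc (fun p : 'I_n => nth 0 x p) k = powersum x k.
Proof. by move=> <-; rewrite /verma_cc /powersum (big_nth 0) big_mkord. Qed.

Section FixedEnds.

Variables (r s : nat).

Lemma exists_verma_weight_with_ends n (bn : 'I_r -> algC) (cn : 'I_s -> algC)
    (t : nat -> algC) :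
  (r + s <= n)%N ->
  exists mu : 'I_n -> algC,
    [/\ (forall (i : 'I_r) (p : 'I_n), val p = val i -> mu p = bn i),
        (forall (j : 'I_s) (p : 'I_n), val p = (n - j.+1)%N -> mu p = cn j) &
        (forall k, (0 < k)%N -> (k * k + r + s <= n)%N -> verma_cc mu k = t k)].
Proof.
move=> le_rs_n; pose m := (n - (r + s))%N.
pose bs := [seq bn i | i <- enum 'I_r].
pose cs := rev [seq cn j | j <- enum 'I_s].
have size_bs : size bs = r by rewrite size_map size_enum_ord.
have size_cs : size cs = s by rewrite size_rev size_map size_enum_ord.
have [x [size_x px]] :=
  exists_seq_powersums_size (fun k => t k - powersum bs k - powersum cs k) m.
exists (fun p : 'I_n => nth 0 (bs ++ x ++ cs) p); split.
- move=> i p ->; rewrite nth_cat size_bs ltn_ord.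
  by rewrite (nth_map i) ?size_enum_ord //= nth_ord_enum.
- move=> j p ->; have lt_js := ltn_ord j.
  have -> : (n - j.+1 = r + (m + (s - j.+1)))%N by rewrite /m; lia.
  rewrite nth_cat size_bs ltnNge leq_addr addKn.
  rewrite nth_cat size_x ltnNge leq_addr addKn.
  rewrite nth_rev size_map size_enum_ord; last by lia.
  have -> : (s - (s - j.+1).+1 = j)%N by lia.
  by rewrite (nth_map j) ?size_enum_ord //= nth_ord_enum.
- move=> k k_gt0 le_kk_n; rewrite verma_cc_nth; last first.
    by rewrite !size_cat size_bs size_x size_cs /m; lia.
  by rewrite !powersum_cat px // /m; [ring | lia].
Qed.

Lemma exists_central_char_with_ends n (bn : 'I_r -> algC) (cn : 'I_s -> algC)
    (t : nat -> algC) :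
  exists v : nat -> algC,
    [/\ central_char_gl n v,
        (n <= r + s)%N -> forall k, (0 < k)%N -> v k = 0,
        (r + s < n)%N ->
          exists mu : 'I_n -> algC,
            [/\ (forall (i : 'I_r) (p : 'I_n), val p = val i -> mu p = bn i),
                (forall (j : 'I_s) (p : 'I_n), val p = (n - j.+1)%N -> mu p = cn j) &
                (forall k, (0 < k)%N -> v k = verma_cc mu k)] &
        forall k, (0 < k)%N -> (k * k + r + s <= n)%N -> v k = t k].
Proof.
have [le_n_rs | lt_rs_n] := leqP n (r + s).
  exists (fun=> 0); split=> // [|k k_gt0]; last by nia.
  exists (fun=> 0) => k k_gt0; rewrite /verma_cc big1 // => i _.
  by rewrite expr0n gtn_eqF.
have [mu [mu_b mu_c mu_t]] := exists_verma_weight_with_ends bn cn t (ltnW lt_rs_n).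
by exists (verma_cc mu); split=> //; exists mu.
Qed.

End FixedEnds.

Lemma nonprincipal_ultrafilter_eventually (F : (nat -> Prop) -> Prop)
    (P : nat -> Prop) N :
  nonprincipal_ultrafilter F -> (forall n, (N <= n)%N -> P n) -> F P.
Proof.
move=> [[F_true _ F_mono F_and F_ultra] F_nonprincipal].
suff F_ge : F (fun n => (N <= n)%N) by move=> P_ge; exact: F_mono F_ge P_ge.
elim: N => [|N F_ge]; first exact: F_mono F_true _.
have F_neqN : F (fun n => n <> N).
  by case: (F_ultra (fun n => n = N)) => // /F_nonprincipal.
by apply: F_mono (F_and _ _ F_ge F_neqN) _ => n [? ?]; lia.
Qed.

Theorem lemma8 (R : realType) (F : (nat -> Prop) -> Prop)
    (theta : (nat -> algC) -> R[i])
    (HF : nonprincipal_ultrafilter F) (Htheta : ultraproduct_iso F theta)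
    (r s : nat) (b : 'I_r -> nat -> algC) (c : 'I_s -> nat -> algC)
    (psi : nat -> R[i]) :
  exists psin : nat -> nat -> algC,
    [/\ (forall n, central_char_gl n (psin n)),
        (forall k, (0 < k)%N -> psi k = theta (fun n => psin n k)),
        (forall n, (n <= r + s)%N -> forall k, (0 < k)%N -> psin n k = 0) &
        (forall n, (r + s < n)%N ->
           exists mu : 'I_n -> algC,
             [/\ (forall (i : 'I_r) (p : 'I_n), val p = val i -> mu p = b i n),
                 (forall (j : 'I_s) (p : 'I_n), val p = (n - j.+1)%N -> mu p = c j n) &
                 (forall k, (0 < k)%N -> psin n k = verma_cc mu k)])].
Proof.
have [theta_eq theta_surj _ _ _] := Htheta.
have [f theta_f] := choice _ (fun k => theta_surj (psi k)).
have [psin psinP] := choice _ (fun n => exists_central_char_with_ends n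
  (fun i => b i n) (fun j => c j n) (fun k => f k n)).
exists psin; split=> [n|k k_gt0|n|n]; try by case: (psinP n).
rewrite -theta_f; apply/theta_eq.
apply: (nonprincipal_ultrafilter_eventually (N := k * k + r + s) HF) => n le_n.
by case: (psinP n) => _ _ _ /(_ k k_gt0 le_n).
Qed.
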